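(* Let $m,p,n$ be positive integers with $p\mid m$. Any two distinct $p$-connected elements of $G(m,p,n)$ are incomparable in the codimension order.
   Context: $\zeta_m=e^{2\pi i/m}$. $G(m,1,n)$ is the group of $n\times n$ monomial matrices whose nonzero entries are $m$-th roots of unity, acting on $V=\mathbb{C}^n$; for $p\mid m$, $G(m,p,n)$ is the subgroup of those elements whose nonzero entries multiply to an $(m/p)$-th root of unity. $\operatorname{codim}(g)=n-\dim\{v\in V:gv=v\}$, and the codimension order is $a\le_\perp c$ iff $\operatorname{codim}(a)+\operatorname{codim}(a^{-1}c)=\operatorname{codim}(c)$. A diagonal matrix $g\ne 1$ in $G(m,1,n)$ whose non-1 eigenvalues (with multiplicity) are $\zeta_m^{c_1},\dots,\zeta_m^{c_k}$ is called $p$-connected if $p$ divides $c_1+\dots+c_k$ but $p$ does not divide $\sum_{i\in I}c_i$ for any nonempty proper subset $I\subsetneq\{1,\dots,k\}$ (the exponents are defined mod $m$, and $p\mid m$, so this is well defined). *)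

From mathcomp Require Import all_boot all_order all_algebra all_field.
Set Implicit Arguments. Unset Strict Implicit. Unset Printing Implicit Defensive.
Import Order.TTheory GRing.Theory Num.Theory.
Local Open Scope ring_scope.

(* zeta_m = e^{2 pi i/m}: in algC, m.-root (-1) is the 2m-th root of unity with
   minimal nonnegative argument, i.e. e^{i pi/m}; its square is e^{2 pi i/m}. *)
Definition zeta (m : nat) : algC := (m.-root (-1)) ^+ 2.

Definition monomial n (A : 'M[algC]_n) : Prop :=
  (forall i, #|[set j | A i j != 0]| = 1%N) /\
  (forall j, #|[set i | A i j != 0]| = 1%N).

Definition inG1 (m n : nat) (A : 'M[algC]_n) : Prop :=
  monomial A /\ (forall i j, A i j != 0 -> A i j ^+ m = 1).

Definition nzprod n (A : 'M[algC]_n) : algC :=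
  \prod_(i < n) \prod_(j < n | A i j != 0) A i j.

Definition inG (m p n : nat) (A : 'M[algC]_n) : Prop :=
  inG1 m A /\ nzprod A ^+ (m %/ p) = 1.

(* fixed space {v in C^n : g v = v} (column vectors v, encoded as rows v^T
   with v^T g^T = v^T) and codimension *)
Definition fixspace n (g : 'M[algC]_n) : 'M[algC]_n := kermx (g^T - 1%:M).
Definition codim n (g : 'M[algC]_n) : nat := (n - \rank (fixspace g))%N.

Definition codim_le n (a c : 'M[algC]_n) : Prop :=
  (codim a + codim (invmx a *m c))%N = codim c.

Definition p_connected (m p n : nat) (g : 'M[algC]_n) : Prop :=
  inG1 m g /\ is_diag_mx g /\ g <> 1%:M /\
  exists c : 'I_n -> nat,
    (forall i, g i i = zeta m ^+ c i) /\
    let S := [set i | g i i != 1] in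
    (p %| \sum_(i in S) c i)%N /\
    (forall I : {set 'I_n}, I \proper S -> I != set0 ->
        ~~ (p %| \sum_(i in I) c i)%N).

From mathcomp Require Import all_boot all_order all_algebra all_field.
From mathcomp Require Import lra zify.
Import Order.TTheory GRing.Theory Num.Theory.
Set Implicit Arguments. Unset Strict Implicit. Unset Printing Implicit Defensive.
Local Open Scope ring_scope.

(* For diagonal [a] and [c], [codim] counts the diagonal entries different
   from 1 and [a^-1 c] is diagonal with entries [c_ii / a_ii]; additivity of
   the codimensions therefore forces [c] to agree with [a] on the support [S_a]
   of [a], so [S_a] is contained in [S_c].  If [S_a = S_c] then [a = c];
   otherwise [S_a] is a nonempty proper subset of [S_c] on which the exponents
   of [c] and of [a] have the same sum modulo [m], hence a sum divisible by
   [p], contradicting the [p]-connectedness of [c].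
   That [zeta m] is a primitive [m]-th root of unity is proved without
   trigonometry: the [2m]-th root of unity of largest real part in the closed
   upper half-plane generates all roots of the upper half-plane, as dividing
   by it strictly increases the real part while staying there. *)

Lemma rotate_upper_unit_real (R : realFieldType) (a b c d : R) :
  a ^+ 2 + b ^+ 2 = 1 -> c ^+ 2 + d ^+ 2 = 1 -> 0 <= b -> 0 <= d ->
  a <= c -> c != 1 -> 0 <= c * b - a * d /\ a < a * c + b * d.
Proof.
move=> ab1 cd1 b_ge0 d_ge0 le_ac c_neq1.
have c_lt1 : c < 1 by rewrite lt_neqAle c_neq1 /=; nra.
split.
- have [c_ge0|c_lt0] := lerP 0 c; have [a_ge0|a_lt0] := lerP 0 a.
  + have : d <= b by nra. nra.
  + nra.
  + nra.
  + have : b <= d by nra. nra.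
- have [a_lt0|a_ge0] := ltrP a 0; first nra.
  have [a0|a_gt0] := eqVneq a 0.
    subst a; have b1 : b = 1 by nra.
    have d_gt0 : 0 < d by nra.
    nra.
  have : d <= b by nra. nra.
Qed.

(* [nra] needs a real field, so real and imaginary parts are read in [algR]. *)
Definition ReR (x : algC) : algR := in_algR (Creal_Re x).
Definition ImR (x : algC) : algR := in_algR (Creal_Im x).

Lemma normC1_ReR_ImR (x : algC) : `|x| = 1 -> ReR x ^+ 2 + ImR x ^+ 2 = 1.
Proof. by move=> x1; apply: val_inj; rewrite /= -normC2_Re_Im x1 expr1n. Qed.

Lemma rotate_upper_unit (x g : algC) :
    `|x| = 1 -> `|g| = 1 -> 0 <= 'Im x -> 0 <= 'Im g ->
    'Re x <= 'Re g -> g != 1 ->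
  0 <= 'Im (x / g) /\ 'Re x < 'Re (x / g).
Proof.
move=> x1 g1 Imx_ge0 Img_ge0 le_Re g_neq1.
have Reg_neq1 : ReR g != 1.
  apply: contra_neq g_neq1 => /(congr1 val) /= Reg1.
  have := congr1 val (normC1_ReR_ImR g1) => /=.
  rewrite Reg1 mulr1 => /eqP.
  rewrite eq_sym addrC -subr_eq subrr eq_sym mulf_eq0 orbb => /eqP Img0.
  by rewrite [g]Crect Reg1 Img0 mulr0 addr0.
have [] := rotate_upper_unit_real (normC1_ReR_ImR x1) (normC1_ReR_ImR g1)
  Imx_ge0 Img_ge0 le_Re Reg_neq1.
by rewrite Im_div Re_div g1 expr1n !divr1; split.
Qed.

Lemma unity_root_norm1 N (x : algC) : (0 < N)%N -> x ^+ N = 1 -> `|x| = 1.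
Proof.
move=> N_gt0 xN1; apply/eqP.
by rewrite -(pexpr_eq1 N_gt0) ?normr_ge0 // -normrX xN1 normr1.
Qed.

Lemma prim_root_half_expr n (x : algC) :
  (0 < n)%N -> (n.*2).-primitive_root x -> x ^+ n = -1.
Proof.
move=> n_gt0 prim_x.
have : (x ^+ n) ^+ 2 == 1 by rewrite -exprM muln2 prim_expr_order.
rewrite sqrf_eq1 => /orP[/eqP xn1|/eqP //].
have := prim_order_dvd prim_x n; rewrite xn1 eqxx => /(dvdn_leq n_gt0).
lia.
Qed.

Lemma upper_prim_root_exists N :
  (0 < N)%N -> exists2 v : algC, N.-primitive_root v & 0 <= 'Im v.
Proof.
move=> /C_prim_root_exists[u prim_u].
have [Imu_ge0|Imu_lt0] := boolP (0 <= 'Im u); first by exists u.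
exists u^*; first by rewrite fmorph_primitive_root.
by rewrite Im_conj oppr_ge0 ltW // real_ltNge ?Creal_Im ?real0.
Qed.

(* [g] is the [N]-th root of unity of least positive argument, characterised
   without trigonometry by a maximal real part in the closed upper half-plane. *)
Definition least_arg_unity_root N (g : algC) :=
  [/\ g ^+ N = 1, g != 1, 0 <= 'Im g &
      forall x, x ^+ N = 1 -> x != 1 -> 0 <= 'Im x -> 'Re x <= 'Re g].

Lemma least_arg_unity_root_exists N :
  (1 < N)%N -> exists g, least_arg_unity_root N g.
Proof.
move=> N_gt1; have N_gt0 := ltnW N_gt1.
have [u prim_u] := C_prim_root_exists N_gt0.
have [v prim_v Imv_ge0] := upper_prim_root_exists N_gt0.
have [k0 v_def] := prim_rootP prim_u (prim_expr_order prim_v).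
pose P (k : 'I_N) := (u ^+ k != 1) && (0 <= 'Im (u ^+ k)).
have Pk0 : P k0.
  rewrite /P -v_def Imv_ge0 andbT; apply: contraTneq N_gt1 => v1.
  by rewrite -leqNgt dvdn_leq // (prim_order_dvd prim_v) expr1 v1.
have [k /andP[g_neq1 Img_ge0] k_max] :=
  @arg_maxP _ _ _ k0 P (fun k => ReR (u ^+ k)) Pk0.
exists (u ^+ k); split=> // [|x xN1 x_neq1 Imx_ge0].
  by rewrite exprAC (prim_expr_order prim_u) expr1n.
have [kx x_def] := prim_rootP prim_u xN1; rewrite x_def in x_neq1 Imx_ge0 *.
by apply: k_max; apply/andP.
Qed.

Section LeastArgUnityRoot.

Variables (N : nat) (g : algC).
Hypotheses (N_gt0 : (0 < N)%N) (least_g : least_arg_unity_root N g).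

Lemma least_arg_unity_root_expr x :
  x ^+ N = 1 -> 0 <= 'Im x -> exists k, x = g ^+ k.
Proof.
case: least_g => gN1 g_neq1 Img_ge0 g_max.
have [u prim_u] := C_prim_root_exists N_gt0.
pose above y := #|[set k : 'I_N | 'Re y < 'Re (u ^+ k)]|.
have [r] := ubnP (above x).
elim: r x => [|r IHr] x // above_x xN1 Imx_ge0.
have [->|x_neq1] := eqVneq x 1; first by exists 0%N.
have [Imy_ge0 lt_Re_xy] := rotate_upper_unit (unity_root_norm1 N_gt0 xN1)
  (unity_root_norm1 N_gt0 gN1) Imx_ge0 Img_ge0 (g_max x xN1 x_neq1 Imx_ge0) g_neq1.
have g_neq0 : g != 0 by rewrite -normr_eq0 (unity_root_norm1 N_gt0 gN1) oner_eq0.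
have yN1 : (x / g) ^+ N = 1 by rewrite expr_div_n xN1 gN1 divr1.
have above_y : (above (x / g) < above x)%N.
  apply: proper_card; apply/properP; split.
    by apply/subsetP => k; rewrite !inE => /(lt_trans lt_Re_xy).
  have [ky y_def] := prim_rootP prim_u yN1.
  by exists ky; rewrite !inE -y_def ?lt_Re_xy ?ltxx.
have [k y_def] := IHr _ (leq_trans above_y above_x) yN1 Imy_ge0.
by exists k.+1; rewrite exprSr -y_def divfK.
Qed.

Lemma least_arg_unity_root_prim : N.-primitive_root g.
Proof.
case: least_g => gN1 _ _ _.
have [v prim_v Imv_ge0] := upper_prim_root_exists N_gt0.
have [k v_def] := least_arg_unity_root_expr (prim_expr_order prim_v) Imv_ge0.
have [d prim_g d_dvdN] := prim_order_exists N_gt0 gN1.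
suff /eqP <- : d == N by [].
rewrite eqn_dvd d_dvdN (prim_order_dvd prim_v) v_def -exprM mulnC exprM.
by rewrite (prim_expr_order prim_g) expr1n eqxx.
Qed.

End LeastArgUnityRoot.

Lemma rootCN1_least_arg n :
  (0 < n)%N -> least_arg_unity_root n.*2 (n.-root (-1)).
Proof.
move=> n_gt0; set w := n.-root (-1).
have wn : w ^+ n = -1 by rewrite rootCK.
have w_neq1 : w != 1.
  apply: contra_eq_neq wn => ->.
  by rewrite expr1n gt_eqF // (lt_trans (ltrN10 _) ltr01).
have Imw_ge0 : 0 <= 'Im w.
  have [n_gt1|n_le1] := ltnP 1 n; first exact: Im_rootC_ge0.
  have -> : w = -1 by rewrite /w (_ : n = 1%N) ?root1C //; lia.
  by rewrite (Creal_ImP _ _) ?rpredN1.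
have n2_gt1 : (1 < n.*2)%N by rewrite -addnn; lia.
have [g least_g] := least_arg_unity_root_exists n2_gt1.
have prim_g := least_arg_unity_root_prim (ltnW n2_gt1) least_g.
case: least_g => _ g_neq1 Img_ge0 g_max.
split=> // [|x xN1 x_neq1 Imx_ge0].
  by rewrite -addnn exprD wn mulrNN mulr1.
apply: le_trans (g_max x xN1 x_neq1 Imx_ge0) _.
exact: rootC_Re_max (prim_root_half_expr n_gt0 prim_g) Img_ge0.
Qed.

Lemma zeta_prim m : (0 < m)%N -> m.-primitive_root (zeta m).
Proof.
move=> m_gt0; have m2_gt0 : (0 < m.*2)%N by rewrite double_gt0.
have prim_w := least_arg_unity_root_prim m2_gt0 (rootCN1_least_arg m_gt0).
rewrite -muln2 in prim_w.
by have := dvdn_prim_root prim_w (dvdn_mulr 2 (dvdnn m)); rewrite mulKn.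
Qed.

Lemma prim_root_sum_expr_mod (R : unitRingType) m (z : R) (I : finType)
    (A : {pred I}) (f g : I -> nat) :
    m.-primitive_root z -> {in A, forall i, z ^+ f i = z ^+ g i} ->
  (\sum_(i in A) f i = \sum_(i in A) g i %[mod m])%N.
Proof.
move=> prim_z eq_fg; apply/eqP; rewrite -(eq_prim_root_expr prim_z) !expr_sum.
by apply/eqP/eq_bigr.
Qed.

Lemma rank_diag_mx (F : fieldType) n (d : 'rV[F]_n) :
  \rank (diag_mx d) = #|[set i | d 0 i != 0]|.
Proof.
set S := [set i | d 0 i != 0].
pose f (j : 'I_#|S|) := enum_val j.
pose B : 'M[F]_(n, #|S|) := \matrix_(i, j) ((i == f j)%:R / d 0 i).
have rowsub_inv : rowsub f (diag_mx d) *m B = 1%:M.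
  apply/matrixP => j j'; rewrite !mxE (bigD1 (f j)) //= big1.
    have : d 0 (f j) != 0 by have := enum_valP j; rewrite inE.
    rewrite !mxE eqxx mulr1n addr0 mulrCA => /divff->.
    by rewrite mulr1 (inj_eq enum_val_inj).
  by move=> i /negPf i_neq; rewrite !mxE eq_sym i_neq mulr0n mul0r.
have rank_rowsub : \rank (rowsub f (diag_mx d)) = #|S|.
  apply/eqP; rewrite eqn_leq rank_leq_row /=.
  by rewrite -{1}(mxrank1 F #|S|) -rowsub_inv mxrankM_maxl.
rewrite -rank_rowsub; apply/eqP; rewrite eqn_leq; apply/andP; split; apply: mxrankS.
  apply/row_subP => i; have [Si|] := boolP (i \in S).
    by rewrite -(enum_rankK_in Si Si) -row_rowsub row_sub.
  by rewrite inE negbK row_diag_mx => /eqP->; rewrite scale0r sub0mx.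
by apply/row_subP => j; rewrite row_rowsub row_sub.
Qed.

Lemma codim_diag_mx n (d : 'rV[algC]_n) :
  codim (diag_mx d) = #|[set i | d 0 i != 1]|.
Proof.
rewrite /codim /fixspace mxrank_ker tr_diag_mx subKn ?rank_leq_col //.
have -> : diag_mx d - 1%:M = diag_mx (\row_i (d 0 i - 1)).
  by rewrite -diag_const_mx -linearB; congr diag_mx; apply/rowP => i; rewrite !mxE.
by rewrite rank_diag_mx; apply: eq_card => i; rewrite !inE !mxE subr_eq0.
Qed.

Lemma invmx_diag_mulmx n (d e : 'rV[algC]_n) : (forall i, d 0 i != 0) ->
  invmx (diag_mx d) *m diag_mx e = diag_mx (\row_i (e 0 i / d 0 i)).
Proof.
move=> d_neq0; have d_unit : diag_mx d \in unitmx.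
  by rewrite unitmxE det_diag unitfE; apply/prodf_neq0.
apply: (canLR (mulKmx d_unit)); rewrite mulmx_diag; congr diag_mx.
by apply/rowP => i; rewrite !mxE mulrCA divff ?mulr1.
Qed.

Lemma diag_mx_ii (R : nmodType) n (d : 'rV[R]_n) i : diag_mx d i i = d 0 i.
Proof. by rewrite mxE eqxx mulr1n. Qed.

Lemma is_diag_mx_eq (R : nmodType) n (a c : 'M[R]_n) :
  is_diag_mx a -> is_diag_mx c -> (forall i, a i i = c i i) -> a = c.
Proof.
case/diag_mxP => d ->; case/diag_mxP => e -> eq_ii; congr diag_mx.
by apply/rowP => i; have := eq_ii i; rewrite !diag_mx_ii.
Qed.

Lemma codim_le_diag_agree n (a c : 'M[algC]_n) :
    is_diag_mx a -> is_diag_mx c -> (forall i, a i i != 0) -> codim_le a c ->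
  forall i, a i i != 1 -> c i i = a i i.
Proof.
case/diag_mxP => d ->; case/diag_mxP => e ->.
move=> d_neq0; have {}d_neq0 i : d 0 i != 0 by rewrite -diag_mx_ii.
rewrite /codim_le invmx_diag_mulmx // !codim_diag_mx.
set Sd := [set i | d 0 i != 1]; set Se := [set i | e 0 i != 1].
set D := [set i | _] => card_eq.
have D_def i : (i \in D) = (e 0 i != d 0 i).
  rewrite !inE ?mxE; congr negb.
  by apply/eqP/eqP => [|->]; [exact: divr1_eq | exact: divff].
have sub_SeU : Se \subset Sd :|: D.
  apply/subsetP => i; rewrite in_setU D_def !inE.
  by have [->|] := eqVneq (e 0 i) (d 0 i); rewrite ?orbT // orbF.
have SdD0 : Sd :&: D = set0.
  apply: cards0_eq; have := subset_leq_card sub_SeU; rewrite cardsU -card_eq.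
  by have := subset_leq_card (subsetIl Sd D); lia.
move=> i; rewrite !diag_mx_ii => Sd_i; apply/eqP.
rewrite -[_ == _]negbK -D_def; apply/negP => D_i.
have : i \in Sd :&: D by rewrite in_setI D_i andbT inE.
by rewrite SdD0 inE.
Qed.

Lemma p_connected_codim_le m p n (a c : 'M[algC]_n) :
    (0 < m)%N -> (p %| m)%N -> p_connected m p a -> p_connected m p c ->
  codim_le a c -> a = c.
Proof.
move=> m_gt0 p_dvd_m [_ [a_diag [a_neq1 [ca [a_exp [p_dvd_suma _]]]]]].
move=> [_ [c_diag [_ [cc [c_exp [_ c_conn]]]]]] le_ac.
have prim_z := zeta_prim m_gt0.
have a_neq0 i : a i i != 0.
  by rewrite a_exp expf_neq0 // (prim_root_eq0 prim_z) -lt0n.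
have agree := codim_le_diag_agree a_diag c_diag a_neq0 le_ac.
set Sa := [set i | a i i != 1] in a_neq1 p_dvd_suma agree *.
set Sc := [set i | c i i != 1] in c_conn *.
have sub_SaSc : Sa \subset Sc.
  by apply/subsetP => i; rewrite !inE => Sa_i; rewrite agree.
have [eq_SaSc|neq_SaSc] := eqVneq Sa Sc.
  apply: is_diag_mx_eq => // i.
  have [/agree-> //|/negbNE/eqP a_ii1] := boolP (a i i != 1).
  have : i \notin Sc by rewrite -eq_SaSc inE a_ii1 eqxx.
  by rewrite inE negbK a_ii1 => /eqP.
have Sa_neq0 : Sa != set0.
  apply: contra_not_neq a_neq1 => Sa0.
  apply: is_diag_mx_eq => // i.
  by move: (in_set0 i); rewrite -Sa0 inE mxE eqxx => /negbFE/eqP.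
have Sa_proper : Sa \proper Sc by rewrite properEneq neq_SaSc.
have /negP[] := c_conn Sa Sa_proper Sa_neq0.
have eq_mod : (\sum_(i in Sa) cc i = \sum_(i in Sa) ca i %[mod m])%N.
  apply: prim_root_sum_expr_mod prim_z _ => i.
  by rewrite inE -a_exp -c_exp => /agree.
by rewrite /dvdn -(modn_dvdm _ p_dvd_m) eq_mod modn_dvdm.
Qed.

Theorem mainTheorem5 (m p n : nat) :
  (0 < m)%N -> (0 < p)%N -> (0 < n)%N -> (p %| m)%N ->
  forall a c : 'M[algC]_n,
    inG m p a -> inG m p c ->
    p_connected m p a -> p_connected m p c -> a <> c ->
    ~ codim_le a c /\ ~ codim_le c a.
Proof.
move=> m_gt0 _ _ p_dvd_m a c _ _ conn_a conn_c a_neq_c.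
split=> [le_ac|le_ca]; first exact/a_neq_c/(p_connected_codim_le m_gt0 p_dvd_m).
exact/a_neq_c/esym/(p_connected_codim_le m_gt0 p_dvd_m conn_c conn_a).
Qed.
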